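(* Let $(\mathcal{A},\varphi)$ be a tracial noncommutative probability space. Let $T_1=(V_1,E_1,\gamma_1)$ and $T_2=(V_2,E_2,\gamma_2)$ be test graphs in $\mathcal{A}$ with $T_2$ two-edge-connected. Let $T_1\sharp T_2$ be the test graph obtained from disjoint copies of $T_1$ and $T_2$ by identifying an arbitrary vertex $v_1$ of $T_1$ with an arbitrary vertex $v_2$ of $T_2$. Then $\tau_\varphi[T_1\sharp T_2]=\tau_\varphi[T_1]\,\tau_\varphi[T_2]$; in particular this is independent of the choice of $v_1$ and $v_2$.
   Context: $(\mathcal{A},\varphi)$: unital complex algebra with unital tracial linear functional; free cumulants $\kappa_n$ determined by $\varphi(a_1\cdots a_n)=\sum_{\pi\in NC(n)}\prod_{B\in\pi}\kappa_{|B|}[(a_i)_{i\in B}]$. A test graph in $\mathcal{A}$ is a finite connected directed multigraph (loops, parallel edges allowed) with edge labels in $\mathcal{A}$; $T^\pi$ identifies the vertices in each block of a partition $\pi$ of the vertex set. A cactus is a connected multigraph in which every edge lies in exactly one simple cycle (loops, pairs of parallel edges count as cycles); these are its pads; an oriented cactus is one whose pads are directed cycles. $\tau^0_\varphi[T]=\prod_{C\in\mathrm{Pads}(T)}\kappa_{n_C}[\gamma(e_1),\dots,\gamma(e_{n_C})]$ if $T$ is an oriented cactus (edges of $C$ listed with $\mathrm{src}(e_i)=\mathrm{tgt}(e_{i+1})$, indices mod $n_C$), and $0$ otherwise; $\tau_\varphi[T]=\sum_{\pi}\tau^0_\varphi[T^\pi]$ over all partitions of the vertex set. A connected multigraph is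 two-edge-connected if it has no cut-edge (no single edge whose deletion disconnects it). *)

From HB Require Import structures.
From mathcomp Require Import all_boot all_order all_algebra.
From mathcomp Require Import complex.
From mathcomp Require Import reals.
Set Implicit Arguments.
Unset Strict Implicit.
Unset Printing Implicit Defensive.
Import Order.TTheory GRing.Theory Num.Theory.
Local Open Scope ring_scope.

Section Graphs.
Variable A : Type.
Variables (K : nzRingType).

Section Generic.
Variables (E W : finType) (src tgt : E -> W).

Definition joins (e : E) (x y : W) : bool :=
  ((src e == x) && (tgt e == y)) || ((src e == y) && (tgt e == x)).

Definition gconnected (ES : {set E}) (VS : {set W}) : bool :=
  [forall x in VS, forall y in VS,
     connect (fun a b => [exists e in ES, joins e a b]) x y].

Definition is_cycle (C : {set E}) : bool :=
  (0 < #|C|)%N &&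
  [exists es : (#|C|).-tuple E, exists vs : (#|C|).-tuple W,
    [&& uniq es, uniq vs, [set x in es] == C &
      [forall i : 'I_#|C|,
         joins (tnth es i) (tnth vs i) (nth (tnth vs i) vs ((i.+1) %% #|C|))]]].

Definition is_dcycle (C : {set E}) : bool :=
  (0 < #|C|)%N &&
  [exists es : (#|C|).-tuple E, exists vs : (#|C|).-tuple W,
    [&& uniq es, uniq vs, [set x in es] == C &
      [forall i : 'I_#|C|,
         (tgt (tnth es i) == tnth vs i) &&
         (src (tnth es i) == nth (tnth vs i) vs ((i.+1) %% #|C|))]]].

Definition cactus (VS : {set W}) : bool :=
  gconnected setT VS &&
  [forall e : E, #|[set C : {set E} | is_cycle C & e \in C]| == 1%N].

Definition oriented_cactus (VS : {set W}) : bool :=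
  cactus VS && [forall C : {set E}, is_cycle C ==> is_dcycle C].

(* edges of a directed pad listed as e_1, ..., e_n with src e_i = tgt e_(i+1) *)
Definition pad_next (C : {set E}) (e : E) : E :=
  odflt e [pick e' in C | tgt e' == src e].

Definition pad_edges (C : {set E}) : seq E :=
  if [pick e in C] is Some e0 then traject (pad_next C) e0 #|C| else [::].

Definition tau0 (kappa : seq A -> K) (gamma : E -> A) (VS : {set W}) : K :=
  if oriented_cactus VS then
    \prod_(C : {set E} | is_cycle C) kappa [seq gamma e | e <- pad_edges C]
  else 0.

End Generic.

Definition tau (kappa : seq A -> K) (V E : finType) (src tgt : E -> V)
  (gamma : E -> A) : K :=
  \sum_(P : {set {set V}} | partition P [set: V])
    tau0 (pblock P \o src) (pblock P \o tgt) kappa gamma P.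

Definition two_edge_connected (V E : finType) (src tgt : E -> V) : bool :=
  gconnected src tgt setT setT && [forall e : E, gconnected src tgt [set~ e] setT].

Section Sharp.
Variables (V1 E1 V2 E2 : finType) (v1 : V1) (v2 : V2).

Definition sharpV := {w : (V1 + V2)%type | w != inr v2}.
Definition sharp_base : sharpV := exist _ (inl v1) isT.
Definition sharp_proj (w : (V1 + V2)%type) : sharpV := insubd sharp_base w.
(* note: sharp_proj (inr v2) = sharp_base = inl v1, identity otherwise *)

Definition sum_app (S1 S2 : Type) (f1 : E1 -> S1) (f2 : E2 -> S2)
  (e : (E1 + E2)%type) : (S1 + S2)%type :=
  match e with inl e1 => inl (f1 e1) | inr e2 => inr (f2 e2) end.

Definition sharp_src (s1 : E1 -> V1) (s2 : E2 -> V2) (e : (E1 + E2)%type) : sharpV :=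
  sharp_proj (sum_app s1 s2 e).

Definition sharp_lab (g1 : E1 -> A) (g2 : E2 -> A) (e : (E1 + E2)%type) : A :=
  match e with inl e1 => g1 e1 | inr e2 => g2 e2 end.
End Sharp.

End Graphs.

Definition noncrossing (n : nat) (P : {set {set 'I_n}}) : bool :=
  [forall B in P, forall B' in P, (B != B') ==>
    [forall a : 'I_n, forall b : 'I_n, forall c : 'I_n, forall d : 'I_n,
      [&& (a < b)%N, (b < c)%N & (c < d)%N] ==>
      ~~ [&& a \in B, c \in B, b \in B' & d \in B']]].

Definition NCpart (n : nat) (P : {set {set 'I_n}}) : bool :=
  partition P [set: 'I_n] && noncrossing P.

From HB Require Import structures.
From mathcomp Require Import all_boot all_order all_algebra.
From mathcomp Require Import complex reals.
Import GRing.Theory Num.Theory.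

(* By definition tau[T] sums, over the partitions P of the vertices of T, the cactus
   weight of the quotient T^P.  Call a partition of the vertices of T1 # T2 good when the
   block of the glued vertex is the only block meeting both T1 and T2.  Good partitions
   correspond bijectively to pairs (P1, P2) of partitions of T1 and T2, and the quotient
   is then the one-point union of T1^P1 and T2^P2.  A simple cycle of such a union that
   used both sides would change sides twice, each time at the glued vertex, which it
   visits only once; so pads and the cactus condition split, and the weight is the
   product of the weights of T1^P1 and T2^P2.
   If P is not good, some block B other than the glued one meets both sides.  Walking in
   T1 from B towards the glued block up to the first other vertex of T2 gives an ear,
   which a path of T2 closes into a cycle through an edge e of T2.  As T2 has no bridge,
   e also lies on a cycle of T2-edges, so T^P is not a cactus and contributes 0. *)

Set Implicit Arguments.
Unset Strict Implicit.
Unset Printing Implicit Defensive.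

Lemma nth_rot1 (T : Type) (x0 : T) s i : i < size s ->
  nth x0 (rot 1 s) i = nth x0 s (i.+1 %% size s).
Proof.
case: s => [|x s] //= Hi; rewrite rot1_cons nth_rcons.
case: (ltnP i (size s)) => [lt_is|le_si]; first by rewrite modn_small.
have -> : i = size s by apply/eqP; rewrite eqn_leq le_si -ltnS Hi.
by rewrite eqxx modnn.
Qed.

Lemma cyclic_switch (p : pred nat) n i j : i < n -> j < n -> p i -> ~~ p j ->
  exists2 k, k < n & p k && ~~ p (k.+1 %% n).
Proof.
move=> lt_in lt_jn pi npj.
suff /existsP[k Hk] : [exists k : 'I_n, p k && ~~ p (k.+1 %% n)] by exists k.
apply: contraT => /existsPn no_switch; exfalso; move/negP: npj; apply.
have p_from_i m : p ((i + m) %% n).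
  elim: m => [|m IHm]; first by rewrite addn0 modn_small.
  have lt_mn : (i + m) %% n < n by rewrite ltn_pmod // (leq_ltn_trans _ lt_in).
  have := no_switch (Ordinal lt_mn); rewrite /= IHm /= negbK.
  by rewrite -addn1 modnDml addn1 addnS.
have := p_from_i (j + (n - i)); rewrite addnCA subnKC ?(ltnW lt_in) //.
by rewrite -modnDmr modnn addn0 modn_small.
Qed.

Lemma uniq_cycle_cat (T : eqType) (x y : T) s1 s2 :
  uniq (x :: rcons s1 y) -> uniq (y :: rcons s2 x) -> ~~ has (mem s1) s2 ->
  uniq (x :: s1 ++ y :: s2).
Proof.
rewrite /= !rcons_uniq !mem_rcons !inE mem_cat !inE cat_uniq /=.
case/and3P=> /norP[/negbTE-> /negbTE->] /negbTE-> ->.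
by case/and3P=> /norP[_ /negbTE->] /negbTE-> -> /negbTE->.
Qed.

Lemma eq_traject (T : Type) (f g : T -> T) : f =1 g -> traject f =2 traject g.
Proof. by move=> eq_fg x n; elim: n x => //= n IH x; rewrite IH eq_fg. Qed.

Lemma connect_map (T T' : finType) (r : rel T) (r' : rel T') (f : T -> T') x y :
  {homo f : a b / r a b >-> r' a b} -> connect r x y -> connect r' (f x) (f y).
Proof.
move=> homo_f /connectP[p /(homo_path homo_f) Hp ->].
by apply/connectP; exists (map f p); rewrite ?last_map.
Qed.

Lemma set_seq_map (T T' : finType) (f : T -> T') (s : seq T) :
  [set x in map f s] = f @: [set x in s].
Proof.
apply/setP => y; rewrite inE; apply/mapP/imsetP => -[x Hx ->]; exists x => //.
  by rewrite inE.
by rewrite inE in Hx.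
Qed.

Lemma imset_preimset (T T' : finType) (f : T -> T') (C : {set T'}) :
  C \subset codom f -> f @: (f @^-1: C) = C.
Proof.
move=> /subsetP sub_C; apply/setP => y; apply/imsetP/idP => [[x] | Cy].
  by rewrite inE => Cfx ->.
by have /codomP[x Ex] := sub_C y Cy; exists x; rewrite // inE -Ex.
Qed.

(** * Walks and cycles as sequences *)

Section Walks.
Variables (E W : finType).
Implicit Types (J : E -> W -> W -> bool) (es : seq E) (vs : seq W).

Fixpoint walk J x es vs : bool :=
  match es, vs with
  | [::], [::] => true
  | e :: es', v :: vs' => J e x v && walk J v es' vs'
  | _, _ => false
  end.

Lemma walk_size J x es vs : walk J x es vs -> size vs = size es.
Proof. by elim: es x vs => [|e es IH] x [|v vs] //= /andP[_ /IH ->]. Qed.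

Lemma walk_cat J x es1 es2 vs1 vs2 : size vs1 = size es1 ->
  walk J x (es1 ++ es2) (vs1 ++ vs2) = walk J x es1 vs1 && walk J (last x vs1) es2 vs2.
Proof.
elim: es1 x vs1 => [|e es1 IH] x [|v vs1] //= [Hs].
by rewrite IH // andbA.
Qed.

Lemma walk_nthP J x es vs e0 w0 :
  reflect (size vs = size es /\
           forall i, i < size es -> J (nth e0 es i) (nth w0 (x :: vs) i) (nth w0 vs i))
          (walk J x es vs).
Proof.
elim: es x vs => [|e es IH] x [|v vs] /=; try by constructor; case.
  by constructor.
apply: (iffP andP) => [[Je /IH[Hs H]]|[[Hs] H]].
  by split=> [|[|i]]; rewrite ?Hs //=; apply: H.
by split; [apply: (H 0) | apply/IH; split=> // i; apply: (H i.+1)].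
Qed.

Lemma walk_sources J (P : pred W) x es vs :
  (forall e a b, J e a b -> P a) -> walk J x es vs -> all P (belast x vs).
Proof.
move=> JP; elim: es x vs => [|e es IH] x [|v vs] //= /andP[Je /IH->].
by rewrite (JP _ _ _ Je).
Qed.

Definition gcycle J (C : {set E}) : bool :=
  (0 < #|C|) &&
  [exists es : #|C|.-tuple E, exists vs : #|C|.-tuple W,
    [&& uniq es, uniq vs, [set x in es] == C &
      [forall i : 'I_#|C|,
         J (tnth es i) (tnth vs i) (nth (tnth vs i) vs (i.+1 %% #|C|))]]].

Definition cycle_seq J es vs :=
  if vs is x :: vs' then [&& uniq es, uniq vs, 0 < size es & walk J x es (rcons vs' x)]
  else false.

Lemma cycle_seq_cons J es x vs :
  cycle_seq J es (x :: vs) = [&& uniq es, uniq (x :: vs), 0 < size es & walk J x es (rcons vs x)].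
Proof. by []. Qed.

Lemma closed_walkP J es x vs e0 w0 : size (x :: vs) = size es ->
  reflect (forall i, i < size es ->
             J (nth e0 es i) (nth w0 (x :: vs) i) (nth w0 (x :: vs) (i.+1 %% size es)))
          (walk J x es (rcons vs x)).
Proof.
move=> Hs; apply: (iffP (walk_nthP _ _ _ _ e0 w0)) => [[_ H] i lt_i|H].
  by have := H i lt_i; rewrite -rcons_cons nth_rcons Hs lt_i -rot1_cons nth_rot1 Hs.
split=> [|i lt_i]; first by rewrite size_rcons.
by rewrite -rcons_cons nth_rcons Hs lt_i -rot1_cons nth_rot1 Hs //; apply: H.
Qed.

Lemma gcycleP J C :
  reflect (exists es vs, cycle_seq J es vs /\ [set x in es] = C) (gcycle J C).
Proof.
apply: (iffP andP) => [[C_gt0 /existsP[es /existsP[vs]]]|[es [vs [Hcyc <-]]]].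
  case/and4P=> ues uvs /eqP HC /forallP Hes.
  have [e0 _] : exists e0 : E, True.
    by move: C_gt0; rewrite card_gt0 => /set0Pn[e _]; exists e.
  case: vs uvs Hes => -[|x vs] szvs uvs Hes; first by rewrite -(eqP szvs) in C_gt0.
  have szes : size (x :: vs) = size es by rewrite size_tuple (eqP szvs).
  exists es, (x :: vs); split => //=; apply/and4P; split => //; first by rewrite size_tuple.
  apply/(closed_walkP _ e0 x szes).
  move=> i; rewrite size_tuple => lt_i; have := Hes (Ordinal lt_i).
  by rewrite !(tnth_nth e0) !(tnth_nth x) /= (set_nth_default x) // (eqP szvs) ltn_pmod.
case: vs Hcyc => [//|x vs] /and4P[ues uvs es_gt0 Hwalk].
move: (walk_size Hwalk); rewrite size_rcons => szvs.
have szC : #|[set x in es]| = size es by rewrite cardsE (card_uniqP ues).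
rewrite szC es_gt0; split => //.
have [e0 _] : exists e0 : E, True by case: (es) es_gt0 => // e _ _; exists e.
have szvs' : size (x :: vs) == size es by rewrite /= szvs.
apply/existsP; exists (in_tuple es); apply/existsP; exists (Tuple szvs').
rewrite ues uvs eqxx /=; apply/forallP => i.
rewrite !(tnth_nth e0) !(tnth_nth x) /= (set_nth_default x); last first.
  by rewrite (eqP szvs') ltn_pmod.
by move/(closed_walkP _ e0 x szvs): Hwalk; apply.
Qed.

Lemma cycle_seq_one_side J (p : pred E) (b : W) es vs :
  (forall e e' a c c', J e a c -> J e' c c' -> p e != p e' -> c = b) ->
  cycle_seq J es vs -> all p es || all (predC p) es.
Proof.
move=> switch_b; case: vs => [//|x vs]; rewrite cycle_seq_cons => /and4P[_ uvs _ Hw].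
apply: contraT; rewrite negb_or => /andP[/allPn[e1 He1 npe1] /allPn[e2 He2 /negPn pe2]].
have szvs : size (x :: vs) = size es by rewrite -(walk_size Hw) size_rcons.
have /(closed_walkP J e1 x szvs) Jk := Hw.
set n := size es in szvs Jk.
have n_gt0 : 0 < n by rewrite lt0n size_eq0; apply: contraTneq He1 => ->.
have lt_n k : k.+1 %% n < n by rewrite ltn_pmod.
have at_switch k : k < n -> p (nth e1 es k) != p (nth e1 es (k.+1 %% n)) ->
    nth x (x :: vs) (k.+1 %% n) = b.
  by move=> lt_k; apply: switch_b (Jk k lt_k) (Jk _ (lt_n k)).
(* Switching sides both ways would put [b] at two positions of the cycle. *)
pose q m := p (nth e1 es m).
have [i lt_i qi] : exists2 i, i < n & q i.
  by exists (index e2 es); rewrite ?index_mem /q ?nth_index.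
have [j lt_j nqj] : exists2 j, j < n & ~~ q j.
  by exists (index e1 es); rewrite ?index_mem /q ?nth_index.
have [k lt_k /andP[qk nqk1]] := cyclic_switch lt_i lt_j qi nqj.
have [k' lt_k' /andP[nqk' /negPn qk'1]] :=
  @cyclic_switch (predC q) _ _ _ lt_j lt_i nqj (introT negPn qi).
rewrite /q /= in qk nqk1 nqk' qk'1.
have Hk : nth x (x :: vs) (k.+1 %% n) = b by apply: at_switch; rewrite ?qk ?(negbTE nqk1).
have Hk' : nth x (x :: vs) (k'.+1 %% n) = b.
  by apply: at_switch; rewrite ?qk'1 ?(negbTE nqk').
have /eqP : nth x (x :: vs) (k.+1 %% n) = nth x (x :: vs) (k'.+1 %% n) by rewrite Hk Hk'.
by rewrite nth_uniq ?szvs // => /eqP Ekk'; rewrite Ekk' qk'1 in nqk1.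
Qed.

Lemma walks_cycle_seq J x y es1 vs1 es2 vs2 :
  walk J x es1 (rcons vs1 y) -> walk J y es2 (rcons vs2 x) ->
  uniq (x :: vs1 ++ y :: vs2) -> uniq (es1 ++ es2) -> 0 < size es1 ->
  cycle_seq J (es1 ++ es2) (x :: vs1 ++ y :: vs2).
Proof.
move=> W1 W2 Uv Ue es1_gt0; rewrite cycle_seq_cons Ue Uv size_cat addn_gt0 es1_gt0 /=.
by rewrite rcons_cat -cat_rcons walk_cat ?(walk_size W1) // W1 last_rcons.
Qed.

End Walks.

Section Graphs.
Variables (E W : finType) (src tgt : E -> W).

Definition djoins (e : E) (a b : W) := (tgt e == a) && (src e == b).

Lemma is_cycleE C : is_cycle src tgt C = gcycle (joins src tgt) C.
Proof. by []. Qed.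

Lemma is_dcycleE C : is_dcycle src tgt C = gcycle djoins C.
Proof. by []. Qed.

Lemma joinsC e a c : joins src tgt e a c = joins src tgt e c a.
Proof. by rewrite /joins orbC. Qed.

Lemma joins_ends e a c a' c' :
  joins src tgt e a c -> joins src tgt e a' c' -> (a' == a) || (a' == c).
Proof.
rewrite /joins => /orP[]/andP[/eqP H1 /eqP H2] /orP[]/andP[/eqP H3 /eqP H4];
  by subst; rewrite eqxx ?orbT.
Qed.

Lemma cycle_seq_is_cycle es vs :
  cycle_seq (joins src tgt) es vs -> is_cycle src tgt [set e in es].
Proof. by move=> Hc; apply/gcycleP; exists es, vs. Qed.

Lemma walk_edge_ends x es vs e :
  walk (joins src tgt) x es vs -> uniq (x :: vs) -> e \in es ->
  exists a c, [/\ a \in x :: vs, c \in x :: vs, a != c & joins src tgt e a c].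
Proof.
elim: es x vs => [//|e' es IH] x [//|v vs] /= /andP[Je' Hw] /andP[xNv Uv].
rewrite inE => /predU1P[->|/(IH _ _ Hw Uv)[a [c [Ha Hc Hac Jac]]]].
  exists x, v; rewrite !inE !eqxx orbT; split=> //.
  by apply: contraNneq xNv => ->; rewrite inE eqxx.
by exists a, c; rewrite !inE in Ha Hc *; rewrite Ha Hc !orbT.
Qed.

Lemma walk_uniq x es vs : walk (joins src tgt) x es vs -> uniq (x :: vs) -> uniq es.
Proof.
elim: es x vs => [//|e es IH] x [//|v vs] /= /andP[Je Hw] /andP[xNv Uv].
rewrite (IH _ _ Hw Uv) andbT; apply/negP => /(walk_edge_ends Hw Uv)[a [c [Ha Hc Hac Jac]]].
have notx u : u \in v :: vs -> (u == x) = false.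
  by move=> Hu; apply: contraNF xNv => /eqP<-.
have := joins_ends Je Jac; rewrite notx //= => /eqP Ea.
have := joins_ends Je (etrans (joinsC _ _ _) Jac); rewrite notx //= => /eqP Ec.
by rewrite Ea Ec eqxx in Hac.
Qed.

Definition hop (R : pred W) (A : pred E) (a c : W) :=
  R a && [exists e, A e && joins src tgt e a c].

Lemma walk_of_path R A x p : path (hop R A) x p ->
  exists2 es, walk (joins src tgt) x es p & all A es && all R (belast x p).
Proof.
elim: p x => [|c p IH] x /=; first by exists [::].
case/andP=> /andP[Rx /existsP[e /andP[Ae Je]]] /IH[es Hw /andP[HA HR]].
by exists (e :: es) => /=; rewrite ?Je ?Hw ?Ae ?HA ?Rx ?HR.
Qed.

Lemma walk_of_connect R A x y : connect (hop R A) x y -> x != y ->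
  exists es vs, [/\ walk (joins src tgt) x es (rcons vs y), uniq (x :: rcons vs y),
                    all A es & all R (x :: vs)].
Proof.
move=> /connectP[p Hp ->]; case: (shortenP Hp) => p' Hp' Up' _.
case/lastP: p' Hp' Up' => [|vs z] Hp' Up'; first by rewrite eqxx.
have [es Hw /andP[HA HR]] := walk_of_path Hp'.
by rewrite last_rcons => _; exists es, vs; rewrite -(belast_rcons x vs z).
Qed.

Definition cactus_cycles :=
  [forall e, #|[set C : {set E} | is_cycle src tgt C & e \in C]| == 1] &&
  [forall C : {set E}, is_cycle src tgt C ==> is_dcycle src tgt C].

Definition pads_prod (A : Type) (K : nzRingType) (kappa : seq A -> K) (gamma : E -> A) : K :=
  (\prod_(C : {set E} | is_cycle src tgt C) kappa [seq gamma e | e <- pad_edges src tgt C])%R.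

Definition cactus_weight (A : Type) (K : nzRingType) (kappa : seq A -> K) (gamma : E -> A) : K :=
  if cactus_cycles then pads_prod kappa gamma else 0%R.

Lemma tau0E (A : Type) (K : nzRingType) (kappa : seq A -> K) gamma VS :
  tau0 src tgt kappa gamma VS =
  if gconnected src tgt setT VS then cactus_weight kappa gamma else 0%R.
Proof. by rewrite /tau0 /oriented_cactus /cactus /cactus_weight; case: gconnected. Qed.

Lemma cactus_cycles_shared_edge e C C' :
  C != C' -> is_cycle src tgt C -> is_cycle src tgt C' -> e \in C -> e \in C' ->
  cactus_cycles = false.
Proof.
move=> neCC' HC HC' eC eC'; apply/negbTE/nandP; left; apply/forallPn; exists e.
have : #|[set C; C']| <= #|[set D | is_cycle src tgt D & e \in D]|.
  by apply: subset_leq_card; apply/subsetP => D; rewrite !inE => /orP[]/eqP->; apply/andP.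
by rewrite cards2 neCC' neq_ltn orbC => ->.
Qed.

End Graphs.

Lemma connect_hop_lift (V E E' W : finType) (s1 t1 : E -> V) (ES : {set E})
    (s t : E' -> W) (phi : V -> W) (psi : E -> E') (R : pred W) (A : pred E') :
  gconnected s1 t1 ES setT ->
  (forall e, s (psi e) = phi (s1 e)) -> (forall e, t (psi e) = phi (t1 e)) ->
  {in ES, forall e, A (psi e)} -> (forall x, R (phi x)) ->
  forall x y, connect (hop s t R A) (phi x) (phi y).
Proof.
move=> /forall_inP conn s_psi t_psi A_psi R_phi x y.
have /forall_inP/(_ y (in_setT y)) := conn x (in_setT x).
apply: connect_map => a b /existsP[e /andP[He Jab]]; rewrite /hop R_phi /=.
apply/existsP; exists (psi e); rewrite A_psi //=.
by case/orP: Jab => /andP[/eqP Hs /eqP Ht]; rewrite /joins s_psi t_psi Hs Ht !eqxx ?orbT.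
Qed.

(** * Quotients with the same kernel *)

Section SameKernel.
Variables (E V W W' : finType) (f : V -> W) (g : V -> W').
Hypothesis eq_ker : forall x y, (f x == f y) = (g x == g y).

Lemma uniq_map_ker u : uniq (map f u) = uniq (map g u).
Proof.
elim: u => //= y u ->; congr (~~ _ && _).
by elim: u => //= z u IH; rewrite !inE eq_ker IH.
Qed.

Lemma walk_map_ker (Jf : E -> W -> W -> bool) (Jg : E -> W' -> W' -> bool) x es u :
  (forall e a b, Jf e (f a) (f b) = Jg e (g a) (g b)) ->
  walk Jf (f x) es (map f u) = walk Jg (g x) es (map g u).
Proof. by move=> HJ; elim: es x u => [|e es IH] x [|y u] //=; rewrite HJ IH. Qed.

Lemma gcycle_relabel (Jf : E -> W -> W -> bool) (Jg : E -> W' -> W' -> bool) C :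
  (forall e a b, Jf e a b -> a \in codom f) ->
  (forall e a b, Jf e (f a) (f b) = Jg e (g a) (g b)) ->
  gcycle Jf C -> gcycle Jg C.
Proof.
move=> Jf_codom HJ /gcycleP[es [vs [Hc HC]]]; apply/gcycleP.
case: vs Hc => [//|w vs]; rewrite cycle_seq_cons => /and4P[ues uvs es_gt0 Hw].
have /allP : all (mem (codom f)) (w :: vs).
  by rewrite -(belast_rcons w vs w); apply: walk_sources Hw.
rewrite codomE => /subset_mapP[[//|y u] _ [Ew Evs]]; subst w vs.
exists es, (g y :: map g u); split => //.
rewrite cycle_seq_cons ues es_gt0 -!map_cons -uniq_map_ker uvs /=.
by rewrite -map_rcons -(walk_map_ker _ _ _ HJ) map_rcons.
Qed.

Variables (s t : E -> V).

Lemma joins_codom e a b : joins (f \o s) (f \o t) e a b -> a \in codom f.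
Proof. by case/orP=> /andP[/eqP H1 /eqP H2]; [rewrite -H1 | rewrite -H2]; apply: codom_f. Qed.

Lemma djoins_codom e a b : djoins (f \o s) (f \o t) e a b -> a \in codom f.
Proof. by case/andP=> /eqP<- _; apply: codom_f. Qed.

Lemma joins_relabel e x y :
  joins (f \o s) (f \o t) e (f x) (f y) = joins (g \o s) (g \o t) e (g x) (g y).
Proof. by rewrite /joins /= !eq_ker. Qed.

Lemma djoins_relabel e x y :
  djoins (f \o s) (f \o t) e (f x) (f y) = djoins (g \o s) (g \o t) e (g x) (g y).
Proof. by rewrite /djoins /= !eq_ker. Qed.

Lemma pad_edges_relabel C : pad_edges (f \o s) (f \o t) C = pad_edges (g \o s) (g \o t) C.
Proof.
rewrite /pad_edges; case: pickP => // e0 _; apply: eq_traject => e.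
by rewrite /pad_next; congr odflt; apply: eq_pick => e' /=; rewrite eq_ker.
Qed.

End SameKernel.

Section Relabel.
Variables (E V W W' : finType) (s t : E -> V) (f : V -> W) (g : V -> W').
Hypothesis eq_ker : forall x y, (f x == f y) = (g x == g y).

Let eq_ker_sym x y : (g x == g y) = (f x == f y). Proof. by rewrite eq_ker. Qed.

Lemma is_cycle_relabel C : is_cycle (f \o s) (f \o t) C = is_cycle (g \o s) (g \o t) C.
Proof.
rewrite !is_cycleE; apply/idP/idP;
  [apply: (gcycle_relabel eq_ker) | apply: (gcycle_relabel eq_ker_sym)];
  by [apply: joins_codom | apply: joins_relabel].
Qed.

Lemma is_dcycle_relabel C : is_dcycle (f \o s) (f \o t) C = is_dcycle (g \o s) (g \o t) C.
Proof.
rewrite !is_dcycleE; apply/idP/idP;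
  [apply: (gcycle_relabel eq_ker) | apply: (gcycle_relabel eq_ker_sym)];
  by [apply: djoins_codom | apply: djoins_relabel].
Qed.

Lemma cactus_weight_relabel (A : Type) (K : nzRingType) (kappa : seq A -> K) gamma :
  cactus_weight (f \o s) (f \o t) kappa gamma = cactus_weight (g \o s) (g \o t) kappa gamma.
Proof.
rewrite /cactus_weight /cactus_cycles /pads_prod (eq_bigl _ _ is_cycle_relabel).
under eq_bigr do rewrite (pad_edges_relabel eq_ker).
congr (if _ && _ then _ else _).
  apply: eq_forallb => e; congr (_ == _); apply: eq_card => C.
  by rewrite !inE is_cycle_relabel.
by apply: eq_forallb => C; rewrite is_cycle_relabel is_dcycle_relabel.
Qed.

End Relabel.

Lemma gconnected_relabel (E V W : finType) (s t : E -> V) (f : V -> W)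
    (ES : {set E}) (VS : {set W}) :
  gconnected s t ES setT -> {subset VS <= codom f} -> gconnected (f \o s) (f \o t) ES VS.
Proof.
move=> /forall_inP conn_st sub_VS.
apply/forall_inP => _ /sub_VS/codomP[x ->]; apply/forall_inP => _ /sub_VS/codomP[y ->].
have /forall_inP/(_ y (in_setT y)) := conn_st x (in_setT x).
apply: connect_map => a b /existsP[e /andP[He Jab]]; apply/existsP; exists e.
by rewrite He; case/orP: Jab => /andP[/eqP Hs /eqP Ht]; rewrite /joins /= Hs Ht !eqxx ?orbT.
Qed.

Section Partitions.
Variable T : finType.
Implicit Types P Q : {set {set T}}.

Lemma partition_codom_pblock P : partition P [set: T] -> {subset P <= codom (pblock P)}.
Proof.
case/and3P=> _ tiP P0 B PB; have /set0Pn[x Bx] : B != set0 by apply: contraNneq P0 => <-.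
by rewrite -(def_pblock tiP PB Bx) codom_f.
Qed.

Lemma eq_pblock_preim (rT : eqType) (f : T -> rT) x y :
  (pblock (preim_partition f setT) x == pblock (preim_partition f setT) y) = (f x == f y).
Proof.
have /and3P[/eqP cover_f ti_f _] := preim_partitionP f [set: T].
rewrite eq_pblock ?cover_f // pblock_equivalence_partition ?inE //.
by move=> a b c _ _ _; split=> // /eqP->.
Qed.

Lemma eq_partition_pblock P Q : partition P setT -> partition Q setT ->
  (forall x y, (pblock P x == pblock P y) = (pblock Q x == pblock Q y)) -> P = Q.
Proof.
move=> partP partQ eq_PQ.
rewrite -(preim_partition_pblock partP) -(preim_partition_pblock partQ).
by apply: eq_imset => x; apply/setP => y; rewrite !inE eq_PQ.
Qed.

End Partitions.

Lemma tauE (A : Type) (K : nzRingType) (kappa : seq A -> K) (V E : finType)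
    (s t : E -> V) (gamma : E -> A) :
  gconnected s t setT setT ->
  tau kappa s t gamma =
  (\sum_(P | partition P [set: V]) cactus_weight (pblock P \o s) (pblock P \o t) kappa gamma)%R.
Proof.
move=> conn_st; apply: eq_bigr => P partP.
by rewrite tau0E gconnected_relabel //; apply: partition_codom_pblock.
Qed.

(** * Gluing two edge sets *)

Section EdgeEmbedding.
Variables (E E' W : finType) (i : E -> E') (s t : E -> W) (s' t' : E' -> W).
Hypotheses (i_inj : injective i) (s'_i : forall e, s' (i e) = s e)
  (t'_i : forall e, t' (i e) = t e).

Lemma gcycle_imset (J : E -> W -> W -> bool) (J' : E' -> W -> W -> bool) (C : {set E}) :
  (forall e a b, J' (i e) a b = J e a b) -> gcycle J' (i @: C) = gcycle J C.
Proof.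
move=> J'_i.
have cycle_seq_map es vs : cycle_seq J' (map i es) vs = cycle_seq J es vs.
  case: vs => // x vs; rewrite !cycle_seq_cons (map_inj_uniq i_inj) size_map.
  by congr [&& _, _, _ & _]; elim: es x (rcons vs x) => [|e es IH] y [|v ws] //=; rewrite J'_i IH.
apply/gcycleP/gcycleP => -[es [vs [Hc HC]]]; last first.
  by exists (map i es), vs; rewrite cycle_seq_map set_seq_map HC.
have : {subset es <= codom i}.
  move=> e Hes; have : e \in i @: C by rewrite -HC inE.
  by case/imsetP=> e' _ ->; apply: codom_f.
rewrite codomE => /subset_mapP[u _ Eu]; exists u, vs.
split; first by rewrite -cycle_seq_map -Eu.
by apply: (imset_inj i_inj); rewrite -set_seq_map -Eu.
Qed.

Lemma is_cycle_imset (C : {set E}) : is_cycle s' t' (i @: C) = is_cycle s t C.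
Proof. by rewrite !is_cycleE; apply: gcycle_imset => e a b; rewrite /joins s'_i t'_i. Qed.

Lemma is_dcycle_imset (C : {set E}) : is_dcycle s' t' (i @: C) = is_dcycle s t C.
Proof. by rewrite !is_dcycleE; apply: gcycle_imset => e a b; rewrite /djoins s'_i t'_i. Qed.

Hypothesis pick_i : forall P : pred E', (forall x, P x -> x \in codom i) ->
  pick P = omap i (pick (fun x => P (i x))).

Lemma pad_edges_imset (C : {set E}) : pad_edges s' t' (i @: C) = map i (pad_edges s t C).
Proof.
have mem_iC e : (i e \in i @: C) = (e \in C) by rewrite (mem_imset _ _ i_inj).
have next_i e : pad_next s' t' (i @: C) (i e) = i (pad_next s t C e).
  rewrite /pad_next pick_i => [|x /andP[/imsetP[y _ ->] _]]; last exact: codom_f.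
  rewrite (eq_pick (Q := fun x => (x \in C) && (t x == s e))) => [|x /=].
    by case: pickP.
  by rewrite mem_iC s'_i t'_i.
rewrite /pad_edges pick_i => [|x /imsetP[y _ ->]]; last exact: codom_f.
rewrite (eq_pick (Q := mem C)) => [|x /=]; last exact: mem_iC.
case: pickP => //= e0 _; rewrite (card_imset _ i_inj).
by elim: #|C| e0 => //= n IH e0; rewrite next_i IH.
Qed.

Lemma prod_cycles_imset (K : comNzRingType) (F : {set E'} -> K) :
  (\prod_(C | is_cycle s' t' C && (C \subset codom i)) F C =
   \prod_(C | is_cycle s t C) F (i @: C))%R.
Proof.
rewrite (eq_bigl (mem ((fun C : {set E} => i @: C) @: [set C | is_cycle s t C]))) => [|C].
  by rewrite big_imset => [|C1 C2 _ _]; [apply: eq_bigl => C; rewrite inE | apply: imset_inj].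
apply/andP/imsetP => [[HC sub_C]|[C1]].
  exists (i @^-1: C); last by rewrite imset_preimset.
  by rewrite inE -is_cycle_imset imset_preimset.
rewrite inE => HC1 ->; rewrite is_cycle_imset HC1; split=> //.
by apply/subsetP => _ /imsetP[e _ ->]; apply: codom_f.
Qed.

Hypothesis cycle_closed : forall C e, is_cycle s' t' C -> i e \in C -> C \subset codom i.

Lemma card_cycles_through_imset e :
  #|[set C | is_cycle s' t' C & i e \in C]| = #|[set C | is_cycle s t C & e \in C]|.
Proof.
rewrite -(card_imset _ (imset_inj i_inj)); apply: eq_card => C; rewrite inE.
apply/andP/imsetP => [[HC HeC]|[C1]].
  have sub_C := cycle_closed HC HeC.
  exists (i @^-1: C); last by rewrite imset_preimset.
  by rewrite inE -is_cycle_imset imset_preimset ?HC ?inE.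
by rewrite inE => /andP[HC1 He1] ->; rewrite is_cycle_imset (mem_imset _ _ i_inj).
Qed.

End EdgeEmbedding.

Section SumType.
Variables A B : finType.
Implicit Types (x : A + B) (P : pred (A + B)).

Definition is_inl x : bool := if x is inl _ then true else false.

Lemma codom_inl x : (x \in codom inl) = is_inl x.
Proof. by case: x => y /=; [rewrite codom_f | apply/codomP => -[]]. Qed.

Lemma codom_inr x : (x \in codom inr) = ~~ is_inl x.
Proof. by case: x => y /=; [apply/codomP => -[] | rewrite codom_f]. Qed.

Lemma forall_sum P : [forall x, P x] = [forall a, P (inl a)] && [forall b, P (inr b)].
Proof.
apply/forallP/andP => [H|[/forallP H1 /forallP H2]]; first by split; apply/forallP.
by case.
Qed.

Lemma pick_sum P :
  pick P = if pick (fun a => P (inl a)) is Some a then Some (inl a)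
           else omap inr (pick (fun b => P (inr b))).
Proof.
rewrite /pick /enum_mem {1}unlock filter_cat !filter_map.
by case: (filter _ (Finite.enum A)) => //=; case: (filter _ (Finite.enum B)).
Qed.

Lemma pick_inl P : (forall x, P x -> x \in codom inl) ->
  pick P = omap inl (pick (fun a => P (inl a))).
Proof.
move=> P_inl; rewrite pick_sum; case: pickP => //= _.
by case: pickP => //= b /P_inl; rewrite codom_inl.
Qed.

Lemma pick_inr P : (forall x, P x -> x \in codom inr) ->
  pick P = omap inr (pick (fun b => P (inr b))).
Proof.
by move=> P_inr; rewrite pick_sum; case: pickP => //= a /P_inr; rewrite codom_inr.
Qed.

End SumType.

Section GluedGraph.
Variables (E1 E2 W : finType) (s1 t1 : E1 -> W) (s2 t2 : E2 -> W) (s t : E1 + E2 -> W).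
Hypotheses (s_inl : forall e, s (inl e) = s1 e) (t_inl : forall e, t (inl e) = t1 e).
Hypotheses (s_inr : forall e, s (inr e) = s2 e) (t_inr : forall e, t (inr e) = t2 e).
Variable b : W.
Hypothesis shared_vertex :
  forall e1 e2 a c c', joins s t (inl e1) a c -> joins s t (inr e2) c c' -> c = b.

Lemma glued_cycle_side C :
  is_cycle s t C -> (C \subset codom inl) || (C \subset codom inr).
Proof.
rewrite is_cycleE => /gcycleP[es [vs [Hc <-]]].
have side_b e e' a c c' :
    joins s t e a c -> joins s t e' c c' -> is_inl e != is_inl e' -> c = b.
  case: e e' => [e1|e2] [e1'|e2'] //= Jac Jcc' _; first exact: shared_vertex Jac Jcc'.
  by apply: (shared_vertex (a := c')); rewrite joinsC; [exact: Jcc' | exact: Jac].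
have /orP[/allP es_inl|/allP es_inr] := cycle_seq_one_side side_b Hc.
  by apply/orP; left; apply/subsetP => e; rewrite inE codom_inl => /es_inl.
by apply/orP; right; apply/subsetP => e; rewrite inE codom_inr => /es_inr.
Qed.

Lemma glued_cycle_closed_inl C e : is_cycle s t C -> inl e \in C -> C \subset codom inl.
Proof.
by move=> /glued_cycle_side/orP[// | /subsetP sub_C] /sub_C; rewrite codom_inr.
Qed.

Lemma glued_cycle_closed_inr C e : is_cycle s t C -> inr e \in C -> C \subset codom inr.
Proof.
by move=> /glued_cycle_side/orP[/subsetP sub_C | //] /sub_C; rewrite codom_inl.
Qed.

Lemma glued_cycle_inr C :
  is_cycle s t C -> (C \subset codom inr) = ~~ (C \subset codom inl).
Proof.
move=> HC; have /andP[/card_gt0P[e Ce] _] := HC.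
have not_both : ~~ ((C \subset codom inl) && (C \subset codom inr)).
  by apply/andP => -[/subsetP/(_ e Ce) + /subsetP/(_ e Ce)]; rewrite codom_inl codom_inr => ->.
by case/orP: (glued_cycle_side HC) not_both => ->; rewrite ?andbT ?andTb => /negbTE->.
Qed.

Lemma glued_cactus_cycles : cactus_cycles s t = cactus_cycles s1 t1 && cactus_cycles s2 t2.
Proof.
rewrite /cactus_cycles andbACA forall_sum; congr (_ && _); first congr (_ && _).
- apply: eq_forallb => e.
  by rewrite (card_cycles_through_imset (@inl_inj E1 E2) s_inl t_inl glued_cycle_closed_inl).
- apply: eq_forallb => e.
  by rewrite (card_cycles_through_imset (@inr_inj E1 E2) s_inr t_inr glued_cycle_closed_inr).
apply/forallP/andP => [H | [/forallP H1 /forallP H2] C].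
  split; apply/forallP => C.
    by rewrite -(is_cycle_imset inl_inj s_inl t_inl) -(is_dcycle_imset inl_inj s_inl t_inl).
  by rewrite -(is_cycle_imset inr_inj s_inr t_inr) -(is_dcycle_imset inr_inj s_inr t_inr).
apply/implyP => HC; case/orP: (glued_cycle_side HC) => /imset_preimset EC; rewrite -EC in HC *.
  by rewrite (is_dcycle_imset inl_inj s_inl t_inl); apply: (implyP (H1 _));
    rewrite -(is_cycle_imset inl_inj s_inl t_inl).
by rewrite (is_dcycle_imset inr_inj s_inr t_inr); apply: (implyP (H2 _));
  rewrite -(is_cycle_imset inr_inj s_inr t_inr).
Qed.

Lemma glued_pads_prod (A : Type) (K : comNzRingType) (kappa : seq A -> K) g1 g2 :
  pads_prod s t kappa (sharp_lab g1 g2) =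
  (pads_prod s1 t1 kappa g1 * pads_prod s2 t2 kappa g2)%R.
Proof.
rewrite /pads_prod (bigID (fun C : {set E1 + E2} => C \subset codom inl)) /=.
rewrite (prod_cycles_imset inl_inj s_inl t_inl); congr (_ * _)%R.
  apply: eq_bigr => C _.
  by rewrite (pad_edges_imset inl_inj s_inl t_inl (@pick_inl _ _)) -map_comp.
rewrite (eq_bigl (fun C => is_cycle s t C && (C \subset codom inr))) => [|C]; last first.
  by case HC: (is_cycle s t C); rewrite // glued_cycle_inr.
rewrite (prod_cycles_imset inr_inj s_inr t_inr).
apply: eq_bigr => C _.
by rewrite (pad_edges_imset inr_inj s_inr t_inr (@pick_inr _ _)) -map_comp.
Qed.

Lemma glued_cactus_weight (A : Type) (K : comNzRingType) (kappa : seq A -> K) g1 g2 :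
  cactus_weight s t kappa (sharp_lab g1 g2) =
  (cactus_weight s1 t1 kappa g1 * cactus_weight s2 t2 kappa g2)%R.
Proof.
rewrite /cactus_weight glued_cactus_cycles glued_pads_prod.
by case: (cactus_cycles s1 t1); case: (cactus_cycles s2 t2); rewrite ?mul0r ?mulr0.
Qed.

End GluedGraph.

(** * Two cycles through a common edge *)

Section SharedEdge.
Variables (E W : finType) (s t : E -> W) (A : pred E) (U : pred W).
Local Notation hop := (hop s t).
Hypothesis notA_connected : {in U &, forall u u', connect (hop U (predC A)) u u'}.
Hypothesis notA_bridgeless : forall f, ~~ A f ->
  {in U &, forall u u', connect (hop U [pred e | ~~ A e & e != f]) u u'}.

Lemma ear_exists B b : B \in U -> b \in U -> B != b -> connect (hop predT A) B b ->
  exists2 w, (w \in U) && (w != B) &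
             connect (hop [pred a | (a == B) || (a \notin U)] A) B w.
Proof.
move=> UB Ub neBb conn_Bb; set R := [pred a | _].
suff /existsP[w /and3P[Uw neWB ear]] :
    [exists w, [&& w \in U, w != B & connect (hop R A) B w]].
  by exists w; rewrite ?Uw.
apply: contraT => /existsPn no_ear.
have reach u : connect (hop predT A) B u -> connect (hop R A) B u.
  move=> /connectP[p Hp ->]; elim/last_ind: p Hp => [|p z IH] //.
  rewrite rcons_path last_rcons => /andP[Hp /andP[_ Hz]].
  have reach_last := IH Hp; apply/(connect_trans reach_last)/connect1.
  rewrite /hop Hz andbT inE.
  case: eqP => //= neq; apply: contraT => /negPn U_last.
  by have := no_ear (last B p); rewrite U_last reach_last andbT; move/eqP: neq => ->.
by have := no_ear b; rewrite Ub eq_sym neBb reach.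
Qed.

Lemma cycle_through_ear B w : B \in U -> w \in U -> w != B ->
  connect (hop [pred a | (a == B) || (a \notin U)] A) B w ->
  exists e z C, [/\ ~~ A e, [&& joins s t e w z, z \in U & z != w], is_cycle s t C,
                    e \in C & [exists e1 in C, A e1]].
Proof.
move=> UB Uw neWB ear; have neBW : B != w by rewrite eq_sym.
have [es1 [vs1 [W1 U1 A1 R1]]] := walk_of_connect ear neBW.
have [[|e es2] [vs2 [W2 U2 A2 R2]]] := walk_of_connect (notA_connected Uw UB) neWB.
  by move: (walk_size W2); rewrite size_rcons.
set z := head B vs2.
have Je : joins s t e w z by move: W2; rewrite headI => /andP[].
have z_vs2 : z \in rcons vs2 B by rewrite headI mem_head.
have Uz : z \in U.
  move: z_vs2; rewrite mem_rcons inE => /predU1P[-> //|vs2_z].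
  by apply: (allP R2); rewrite inE vs2_z orbT.
have neZW : z != w by apply: contraTneq U2 => <-; rewrite /= z_vs2.
have es1_gt0 : 0 < size es1 by rewrite -(walk_size W1) size_rcons.
have vs1_notU : {in vs1, forall a, a \notin U}.
  move=> a vs1_a; have := allP R1 a; rewrite !inE vs1_a orbT => /(_ isT) /predU1P[Ea|//].
  by move: U1; rewrite /= mem_rcons inE -Ea vs1_a orbT.
have Uv : uniq (B :: vs1 ++ w :: vs2).
  apply: uniq_cycle_cat U1 U2 _; apply/hasPn => v vs2_v; apply/negP => /vs1_notU.
  by apply/negP/negPn/(allP R2); rewrite inE vs2_v orbT.
have Ue : uniq (es1 ++ e :: es2).
  rewrite cat_uniq (walk_uniq W1 U1) (walk_uniq W2 U2) andbT.
  by apply/hasPn => e' /(allP A2) nAe'; apply: contra nAe' => /(allP A1).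
have HC := cycle_seq_is_cycle (walks_cycle_seq W1 W2 Uv Ue es1_gt0).
exists e, z, [set x in es1 ++ e :: es2]; split=> //.
- by move: A2 => /andP[].
- by rewrite Je Uz.
- by rewrite inE mem_cat mem_head orbT.
case: es1 A1 es1_gt0 {W1 Ue HC} => // e1 es1 /andP[Ae1 _] _.
by apply/exists_inP; exists e1; rewrite // inE mem_head.
Qed.

Lemma cycle_through_edge e w z : ~~ A e -> joins s t e w z -> w \in U -> z \in U -> z != w ->
  exists2 C, is_cycle s t C & (e \in C) && [forall e1 in C, ~~ A e1].
Proof.
move=> nAe Je Uw Uz neZW.
have [es3 [vs3 [W3 U3 A3 _]]] := walk_of_connect (notA_bridgeless nAe Uz Uw) neZW.
have We : walk (joins s t) w [:: e] (rcons [::] z) by rewrite /= Je.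
have Uv : uniq (z :: vs3 ++ [:: w]).
  by apply: uniq_cycle_cat U3 _ _; rewrite //= inE eq_sym neZW.
have Ue : uniq (es3 ++ [:: e]).
  rewrite cat_uniq (walk_uniq W3 U3) /= andbT orbF; apply/negP => /(allP A3).
  by rewrite inE eqxx andbF.
have es3_gt0 : 0 < size es3 by rewrite -(walk_size W3) size_rcons.
exists [set x in es3 ++ [:: e]].
  exact: cycle_seq_is_cycle (walks_cycle_seq W3 We Uv Ue es3_gt0).
rewrite inE mem_cat mem_head orbT /=; apply/forall_inP => e1.
by rewrite inE mem_cat inE => /orP[/(allP A3)/andP[] | /eqP->].
Qed.

Lemma shared_edge_cycles B b : B \in U -> b \in U -> B != b -> connect (hop predT A) B b ->
  exists e C C', [/\ C != C', is_cycle s t C, is_cycle s t C', e \in C & e \in C'].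
Proof.
move=> UB Ub neBb conn_Bb; have [w /andP[Uw neWB] ear] := ear_exists UB Ub neBb conn_Bb.
have [e [z [C [nAe /and3P[Je Uz neZW] HC eC /exists_inP[e1 C_e1 Ae1]]]]] :=
  cycle_through_ear UB Uw neWB ear.
have [C' HC' /andP[eC' /forall_inP notA_C']] := cycle_through_edge nAe Je Uw Uz neZW.
exists e, C, C'; split=> //; apply: contraTneq Ae1 => EC.
by apply: notA_C'; rewrite -EC.
Qed.

End SharedEdge.

(** * The one-point union T1 # T2 *)

Section Sharp.
Variables (V1 E1 V2 E2 : finType) (v1 : V1) (v2 : V2).
Variables (src1 tgt1 : E1 -> V1) (src2 tgt2 : E2 -> V2).

Local Notation sharpV := (sharpV V1 v2).
Local Notation base := (sharp_base v1 v2).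
Local Notation sS := (sharp_src v1 v2 src1 src2).
Local Notation sT := (sharp_src v1 v2 tgt1 tgt2).

Definition sharp_inl (x : V1) : sharpV := sharp_proj v1 v2 (inl x).
Definition sharp_inr (y : V2) : sharpV := sharp_proj v1 v2 (inr y).

Lemma val_sharp_inl x : val (sharp_inl x) = inl x.
Proof. by rewrite /sharp_inl /sharp_proj insubdK. Qed.

Lemma val_sharp_inr y : y != v2 -> val (sharp_inr y) = inr y.
Proof. by move=> ne_y; rewrite /sharp_inr /sharp_proj insubdK //= (inj_eq (@inr_inj _ _)). Qed.

Lemma sharp_inl_v1 : sharp_inl v1 = base.
Proof. by apply: val_inj; rewrite val_sharp_inl. Qed.

Lemma sharp_inr_v2 : sharp_inr v2 = base.
Proof. by rewrite /sharp_inr /sharp_proj /insubd insubF //= eqxx. Qed.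

Lemma sharpV_cases (w : sharpV) : (exists x, w = sharp_inl x) \/ (exists y, w = sharp_inr y).
Proof.
case: w => -[x|y] ne_w; [left; exists x | right; exists y]; apply: val_inj.
  by rewrite val_sharp_inl.
by rewrite val_sharp_inr //; rewrite /= (inj_eq (@inr_inj _ _)) in ne_w.
Qed.

Lemma sharp_inl_inj : injective sharp_inl.
Proof. by move=> x x' /(congr1 val); rewrite !val_sharp_inl => -[]. Qed.

Lemma sharp_inr_inj : injective sharp_inr.
Proof.
have ne_base y : y != v2 -> sharp_inr y != base.
  by move=> ne_y; apply/eqP => /(congr1 val); rewrite val_sharp_inr.
move=> y y'; case: (eqVneq y v2) => [->|ne_y]; case: (eqVneq y' v2) => [->|ne_y'] //.
- by rewrite sharp_inr_v2 => /esym/eqP; rewrite (negbTE (ne_base _ ne_y')).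
- by rewrite sharp_inr_v2 => /eqP; rewrite (negbTE (ne_base _ ne_y)).
by move/(congr1 val); rewrite !val_sharp_inr // => -[].
Qed.

Lemma sharp_connected :
  gconnected src1 tgt1 setT setT -> gconnected src2 tgt2 setT setT -> gconnected sS sT setT setT.
Proof.
move=> conn1 conn2.
have hop_sym : connect_sym (hop sS sT predT predT).
  by apply: sym_connect_sym => a b; apply/existsP/existsP => -[e]; exists e; rewrite joinsC.
have to_base w : connect (hop sS sT predT predT) w base.
  case: (sharpV_cases w) => [[x ->]|[y ->]].
    by rewrite -sharp_inl_v1; apply: (connect_hop_lift (phi := sharp_inl) (psi := inl) conn1).
  by rewrite -sharp_inr_v2; apply: (connect_hop_lift (phi := sharp_inr) (psi := inr) conn2).
have gconn_hop : (fun a b => [exists e in setT, joins sS sT e a b]) =2 hop sS sT predT predT.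
  by move=> a b; apply: eq_existsb => e; rewrite inE.
apply/forall_inP => w _; apply/forall_inP => u _; rewrite (eq_connect gconn_hop).
by apply: connect_trans (to_base w) _; rewrite hop_sym.
Qed.

Definition sharp_good (W : eqType) (q : sharpV -> W) : bool :=
  [forall x, forall y, (q (sharp_inl x) == q (sharp_inr y)) ==> (q (sharp_inl x) == q base)].

Section Labels.
Variables (W : finType) (q : sharpV -> W).
Local Notation q1 := (q \o sharp_inl).
Local Notation q2 := (q \o sharp_inr).

Lemma cactus_weight_good (A : Type) (K : comNzRingType) (kappa : seq A -> K) g1 g2 :
  sharp_good q ->
  cactus_weight (q \o sS) (q \o sT) kappa (sharp_lab g1 g2) =
  (cactus_weight (q1 \o src1) (q1 \o tgt1) kappa g1 *
   cactus_weight (q2 \o src2) (q2 \o tgt2) kappa g2)%R.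
Proof.
move=> /forallP good_q.
apply: (glued_cactus_weight _ _ _ _ (b := q base)) => // [e1 e2 a c c' Jac Jcc'].
rewrite joinsC in Jac.
have /codomP[x Ex] := joins_codom (s := src1) (t := tgt1) (f := q1) Jac.
have /codomP[y Ey] := joins_codom (s := src2) (t := tgt2) (f := q2) Jcc'.
rewrite /= in Ex Ey.
by move: (forallP (good_q x) y); rewrite -Ex -Ey eqxx => /eqP.
Qed.

Hypotheses (conn1 : gconnected src1 tgt1 setT setT) (tec2 : two_edge_connected src2 tgt2).

Lemma cactus_weight_bad (A : Type) (K : nzRingType) (kappa : seq A -> K) gamma :
  ~~ sharp_good q -> cactus_weight (q \o sS) (q \o sT) kappa gamma = 0%R.
Proof.
case/forallPn=> x /forallPn[y]; rewrite negb_imply => /andP[/eqP Bxy neBb].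
have [conn2 /forallP conn2e] := andP tec2.
pose U := [pred w | w \in codom q2].
have lift_T2 (ES : {set E2}) (A' : pred (E1 + E2)) : {in ES, forall e, A' (inr e)} ->
    gconnected src2 tgt2 ES setT ->
    {in U &, forall u u', connect (hop (q \o sS) (q \o sT) U A') u u'}.
  move=> A'_inr connES _ _ /codomP[z ->] /codomP[z' ->].
  by apply: (connect_hop_lift (phi := q2) (psi := inr) connES) => // z''; rewrite inE codom_f.
have notA_conn := lift_T2 _ (predC (@is_inl E1 E2)) (fun _ _ => isT) conn2.
have notA_bridge f : ~~ is_inl f ->
    {in U &, forall u u', connect (hop (q \o sS) (q \o sT) U
                                      [pred e | ~~ is_inl e & e != f]) u u'}.
  case: f => // e2 _; apply: lift_T2 (conn2e e2) => e.
  by rewrite !inE /= (inj_eq (@inr_inj _ _)) => ->.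
have UB : q (sharp_inl x) \in U by rewrite inE Bxy codom_f.
have Ub : q base \in U by rewrite inE -sharp_inr_v2 codom_f.
have conn_Bb : connect (hop (q \o sS) (q \o sT) predT (@is_inl E1 E2)) (q (sharp_inl x)) (q base).
  by rewrite -sharp_inl_v1; apply: (connect_hop_lift (phi := q1) (psi := inl) conn1).
have [e [C [C' [neCC' HC HC' eC eC']]]] :=
  shared_edge_cycles notA_conn notA_bridge UB Ub neBb conn_Bb.
by rewrite /cactus_weight (cactus_cycles_shared_edge neCC' HC HC' eC eC').
Qed.

End Labels.

End Sharp.

Section GluePartition.
Variables (V1 V2 : finType) (v1 : V1) (v2 : V2).
Local Notation sharpV := (sharpV V1 v2).
Local Notation i1 := (sharp_inl v1 v2).
Local Notation i2 := (sharp_inr v1 v2).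

Lemma eq_sharp_ker (W1 W2 : eqType) (f : sharpV -> W1) (g : sharpV -> W2) :
  (forall x x', (f (i1 x) == f (i1 x')) = (g (i1 x) == g (i1 x'))) ->
  (forall y y', (f (i2 y) == f (i2 y')) = (g (i2 y) == g (i2 y'))) ->
  (forall x y, (f (i1 x) == f (i2 y)) = (g (i1 x) == g (i2 y))) ->
  forall w u, (f w == f u) = (g w == g u).
Proof.
move=> ker11 ker22 ker12 w u.
case: (sharpV_cases v1 w) => -[? ->]; case: (sharpV_cases v1 u) => -[? ->] //.
by rewrite eq_sym ker12 eq_sym.
Qed.

Variables (P1 : {set {set V1}}) (P2 : {set {set V2}}).

Definition glue_label (w : sharpV) : {set V1} + {set V2} :=
  match val w with
  | inl x => inl (pblock P1 x)
  | inr y => if y \in pblock P2 v2 then inl (pblock P1 v1) else inr (pblock P2 y)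
  end.

Definition glue_partition := preim_partition glue_label setT.

Lemma eq_pblock_glue_partition w u :
  (pblock glue_partition w == pblock glue_partition u) = (glue_label w == glue_label u).
Proof. exact: eq_pblock_preim. Qed.

Lemma glue_label_inl x : glue_label (i1 x) = inl (pblock P1 x).
Proof. by rewrite /glue_label val_sharp_inl. Qed.

Hypothesis partP2 : partition P2 [set: V2].

Lemma glue_label_inr y :
  glue_label (i2 y) =
  if pblock P2 y == pblock P2 v2 then inl (pblock P1 v1) else inr (pblock P2 y).
Proof.
have [/eqP cover2 ti2 _] := and3P partP2.
rewrite eq_sym eq_pblock ?cover2 //; case: (eqVneq y v2) => [->|ne_y].
  by rewrite sharp_inr_v2 -(sharp_inl_v1 v1 v2) glue_label_inl mem_pblock cover2 inE.
by rewrite /glue_label val_sharp_inr.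
Qed.

Lemma eq_glue_label_inl x x' :
  (glue_label (i1 x) == glue_label (i1 x')) = (pblock P1 x == pblock P1 x').
Proof. by rewrite !glue_label_inl (inj_eq (@inl_inj _ _)). Qed.

Lemma eq_glue_label_inr y y' :
  (glue_label (i2 y) == glue_label (i2 y')) = (pblock P2 y == pblock P2 y').
Proof.
rewrite !glue_label_inr.
case: ifP => [/eqP Ey|ne_y]; case: ifP => [/eqP Ey'|ne_y'].
- by rewrite Ey Ey' !eqxx.
- by rewrite Ey [pblock P2 v2 == _]eq_sym ne_y'.
- by rewrite Ey' ne_y.
by rewrite (inj_eq (@inr_inj _ _)).
Qed.

Lemma eq_glue_label_inl_inr x y :
  (glue_label (i1 x) == glue_label (i2 y)) =
  (pblock P1 x == pblock P1 v1) && (pblock P2 y == pblock P2 v2).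
Proof.
rewrite glue_label_inl glue_label_inr.
by case: (pblock P2 y == _); rewrite ?(inj_eq (@inl_inj _ _)) ?andbT ?andbF.
Qed.

Lemma sharp_good_glue_label : sharp_good v1 glue_label.
Proof.
apply/forallP => x; apply/forallP => y; apply/implyP.
by rewrite -(sharp_inl_v1 v1 v2) eq_glue_label_inl_inr eq_glue_label_inl => /andP[].
Qed.

End GluePartition.

Section GluePartitionSums.
Variables (V1 V2 : finType) (v1 : V1) (v2 : V2).
Local Notation i1 := (sharp_inl v1 v2).
Local Notation i2 := (sharp_inr v1 v2).
Local Notation gl := (glue_label v1).

Lemma glue_partition_inj (P1 P1' : {set {set V1}}) (P2 P2' : {set {set V2}}) :
  partition P1 setT -> partition P1' setT -> partition P2 setT -> partition P2' setT ->
  glue_partition v1 v2 P1 P2 = glue_partition v1 v2 P1' P2' -> P1 = P1' /\ P2 = P2'.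
Proof.
move=> part1 part1' part2 part2' eqG.
have eq_label (w u : sharpV V1 v2) : (gl P1 P2 w == gl P1 P2 u) = (gl P1' P2' w == gl P1' P2' u).
  by rewrite -!eq_pblock_glue_partition eqG.
split; apply: eq_partition_pblock => //; [move=> x x' | move=> y y'].
  by rewrite -(eq_glue_label_inl v1 v2 P1 P2) -(eq_glue_label_inl v1 v2 P1' P2') eq_label.
by rewrite -(eq_glue_label_inr v1 v2 P1 part2) -(eq_glue_label_inr v1 v2 P1' part2') eq_label.
Qed.

Lemma sharp_good_partitionE (P : {set {set sharpV V1 v2}}) :
  partition P setT -> sharp_good v1 (pblock P) ->
  P = glue_partition v1 v2 (preim_partition (pblock P \o i1) setT)
                           (preim_partition (pblock P \o i2) setT).
Proof.
move=> partP /forallP good_P.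
set P1 := preim_partition _ _; set P2 := preim_partition _ _.
have part2 : partition P2 setT by apply: preim_partitionP.
apply: eq_partition_pblock => //; first exact: preim_partitionP.
move=> w u; rewrite eq_pblock_glue_partition; apply: (eq_sharp_ker (v1 := v1)) => [x x'|y y'|x y].
- by rewrite /= (eq_glue_label_inl v1 v2 P1 P2) eq_pblock_preim.
- by rewrite /= (eq_glue_label_inr v1 v2 P1 part2) eq_pblock_preim.
rewrite /= eq_glue_label_inl_inr // !eq_pblock_preim /= sharp_inr_v2 sharp_inl_v1.
have [eq_xy|ne_xy] := eqVneq (pblock P (i1 x)) (pblock P (i2 y)).
  by have /implyP/(_ (introT eqP eq_xy)) := forallP (good_P x) y; rewrite -eq_xy => ->.
by apply/esym/negP => /andP[/eqP E1 /eqP E2]; rewrite E1 E2 eqxx in ne_xy.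
Qed.

Lemma sum_sharp_partitions (K : nmodType) (F : {set {set sharpV V1 v2}} -> K) :
  (forall P, partition P setT -> ~~ sharp_good v1 (pblock P) -> F P = 0%R) ->
  (\sum_(P | partition P [set: sharpV V1 v2]) F P =
   \sum_(P1 | partition P1 [set: V1]) \sum_(P2 | partition P2 [set: V2])
     F (glue_partition v1 v2 P1 P2))%R.
Proof.
move=> F_bad; rewrite pair_big /=.
pose D := [set PP : {set {set V1}} * {set {set V2}} | partition PP.1 setT && partition PP.2 setT].
pose glue PP := glue_partition v1 v2 PP.1 PP.2.
rewrite (bigID (mem (glue @: D))) /= [X in (_ + X)%R]big1 ?addr0 => [|P /andP[partP notD]].
  rewrite (eq_bigl (mem (glue @: D))) => [|P]; last first.
    apply/andP/idP => [[]//|DP]; split=> //.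
    by case/imsetP: DP => PP _ ->; apply: preim_partitionP.
  rewrite big_imset => [|[P1 P2] [P1' P2']]; last first.
    rewrite !inE /= => /andP[p1 p2] /andP[p1' p2'].
    by case/(glue_partition_inj p1 p1' p2 p2') => -> ->.
  by apply: eq_bigl => PP; rewrite inE.
apply: F_bad => //; apply: contra notD => good_P; rewrite (sharp_good_partitionE partP good_P).
apply/imsetP.
exists (preim_partition (pblock P \o i1) setT, preim_partition (pblock P \o i2) setT) => //.
by rewrite inE /= !preim_partitionP.
Qed.

End GluePartitionSums.

Lemma cactus_weight_glue_partition (V1 E1 V2 E2 : finType) (v1 : V1) (v2 : V2)
    (src1 tgt1 : E1 -> V1) (src2 tgt2 : E2 -> V2) (A : Type) (K : comNzRingType)
    (kappa : seq A -> K) (g1 : E1 -> A) (g2 : E2 -> A) P1 P2 :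
  partition P2 [set: V2] ->
  let P := glue_partition v1 v2 P1 P2 in
  cactus_weight (pblock P \o sharp_src v1 v2 src1 src2) (pblock P \o sharp_src v1 v2 tgt1 tgt2)
    kappa (sharp_lab g1 g2) =
  (cactus_weight (pblock P1 \o src1) (pblock P1 \o tgt1) kappa g1 *
   cactus_weight (pblock P2 \o src2) (pblock P2 \o tgt2) kappa g2)%R.
Proof.
move=> part2 P; rewrite (cactus_weight_relabel _ _ (eq_pblock_glue_partition v1 P1 P2)).
rewrite cactus_weight_good; last exact: sharp_good_glue_label.
rewrite (cactus_weight_relabel _ _ (f := glue_label v1 P1 P2 \o sharp_inl v1 v2)
  (eq_glue_label_inl v1 v2 P1 P2)).
by rewrite (cactus_weight_relabel _ _ (f := glue_label v1 P1 P2 \o sharp_inr v1 v2)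
  (eq_glue_label_inr v1 v2 P1 part2)).
Qed.

Local Open Scope ring_scope.
Unset Implicit Arguments.

Theorem lemma2p12
  (R : realType) (Alg : algType R[i])
  (phi : {linear Alg -> R[i]^o})
  (phi_unital : phi 1 = 1)
  (phi_tracial : forall a b : Alg, phi (a * b) = phi (b * a))
  (kappa : seq Alg -> R[i])
  (kappa_free_cumulants : forall s : seq Alg,
     phi (\prod_(a <- s) a) =
     \sum_(P : {set {set 'I_(size s)}} | NCpart P)
        \prod_(B in P) kappa [seq s`_i | i : 'I_(size s) <- enum B])
  (V1 E1 : finType) (src1 tgt1 : E1 -> V1) (gamma1 : E1 -> Alg)
  (V2 E2 : finType) (src2 tgt2 : E2 -> V2) (gamma2 : E2 -> Alg)
  (T1_connected : gconnected src1 tgt1 setT setT)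
  (T2_two_edge_connected : two_edge_connected src2 tgt2)
  (v1 : V1) (v2 : V2) :
  tau kappa (sharp_src v1 v2 src1 src2) (sharp_src v1 v2 tgt1 tgt2)
      (sharp_lab gamma1 gamma2)
  = tau kappa src1 tgt1 gamma1 * tau kappa src2 tgt2 gamma2.
Proof.
have [T2_connected _] := andP T2_two_edge_connected.
rewrite !tauE //; last exact: sharp_connected.
rewrite (sum_sharp_partitions (v1 := v1)) => [|P _]; last exact: cactus_weight_bad.
rewrite big_distrl; apply: eq_bigr => P1 _; rewrite big_distrr; apply: eq_bigr => P2 part2.
exact: cactus_weight_glue_partition.
Qed.
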